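(* Let $G$ be a group, $\mathcal H=\{H_1,\ldots,H_m\}$ a collection of subgroups of $G$, and $X$ a finite relative generating set of $G$ with respect to $\mathcal H$. The following are equivalent: (i) the relative Cayley graph $\Gamma^{rel}=\Gamma^{rel}_X(G)$ is hyperbolic; (ii) the left coset graph $\widetilde\Gamma=\widetilde\Gamma_X(G)$ is hyperbolic. Moreover, if $G$ is generated by $X$ in the usual (non-relative) sense, then (i) and (ii) are also equivalent to: (iii) the coned-off Cayley graph $\widehat\Gamma=\widehat\Gamma_X(G)$ is hyperbolic.
   Context: $X\subset G$ is a relative generating set with respect to $\mathcal H$ if $G$ is generated by $X\cup H_1\cup\cdots\cup H_m$. The relative Cayley graph $\Gamma^{rel}_X(G)$ is the Cayley graph of $G$ with respect to the generating set $X\cup H_1\cup\cdots\cup H_m$. The left coset graph $\widetilde\Gamma_X(G)$ is the oriented graph whose vertex set is $\{gH_i : i=1,\ldots,m,\ g\in G\}$, and for two different cosets $fH_i$, $gH_j$ there is an edge from $fH_i$ to $gH_j$ if and only if there exist $a\in fH_i$, $b\in gH_j$ with $b=ax$ for some $x\in X\cup X^{-1}\cup\{1\}$ (the edge is labelled $(i,j,x)$). If $G$ is generated by $X$, the coned-off Cayley graph $\widehat\Gamma_X(G)$ is obtained from the Cayley graph $\Gamma_X(G)$ by adding, for each left coset $gH_i$ ($i=1,\ldots,m$), a new vertex $v(gH_i)$ and an edge of length $1/2$ from each element of $gH_i$ to $v(gH_i)$. All graphs carry their path metrics (edges of the Cayley graphs have length 1). Hyperbolic means Gromov hyperbolic as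 a geodesic metric space. *)

From Stdlib Require Import Reals List.
Open Scope R_scope.
Set Implicit Arguments.

Record Group := {
  carrier :> Type;
  gmul : carrier -> carrier -> carrier;
  gone : carrier;
  ginv : carrier -> carrier;
  gmulA : forall x y z, gmul x (gmul y z) = gmul (gmul x y) z;
  gmul1 : forall x, gmul gone x = x;
  gmulV : forall x, gmul (ginv x) x = gone
}.

Arguments gmul {g}.
Arguments gone {g}.
Arguments ginv {g}.

Definition is_subgroup {G : Group} (H : G -> Prop) : Prop :=
  H gone /\ (forall x y, H x -> H y -> H (gmul x y)) /\ (forall x, H x -> H (ginv x)).

Definition generates {G : Group} (S : G -> Prop) : Prop :=
  forall g : G, exists l : list G,
    (forall s, In s l -> S s \/ S (ginv s)) /\ g = fold_right gmul gone l.

Definition rel_generating {G : Group} (m : nat) (H : nat -> G -> Prop) (X : list G) :=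
  @generates G (fun s => In s X \/ exists i, (i < m)%nat /\ H i s).

Definition lcoset {G : Group} (g : G) (H : G -> Prop) : G -> Prop :=
  fun a => exists h, H h /\ a = gmul g h.

Definition Coset {G : Group} (m : nat) (H : nat -> G -> Prop) :=
  { C : G -> Prop | exists (i : nat) (g : G), (i < m)%nat /\ C = lcoset g (H i) }.

(* wedge u v l : there is an (undirected) edge of length l between u and v *)
Record wgraph := { vert : Type; wedge : vert -> vert -> R -> Prop }.

Inductive walk {Gr : wgraph} : vert Gr -> vert Gr -> R -> Prop :=
| walk_nil (u : vert Gr) : walk u u 0
| walk_cons (u w v : vert Gr) (l l' : R) :
    (wedge Gr u w l \/ wedge Gr w u l) -> walk w v l' -> walk u v (l + l').

Definition is_dist {Gr : wgraph} (u v : vert Gr) (r : R) : Prop :=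
  (forall l, walk u v l -> r <= l) /\
  (forall eps, 0 < eps -> exists l, walk u v l /\ l < r + eps).

Definition connected (Gr : wgraph) : Prop :=
  forall u v : vert Gr, exists l, walk u v l.

(* Gromov hyperbolicity of the path metric (four-point condition on the
   vertex set; equivalent to hyperbolicity of the geodesic geometric
   realization) *)
Definition gprod (dxy dwx dwy : R) : R := (dwx + dwy - dxy) / 2.

Definition hyperbolic (Gr : wgraph) : Prop :=
  connected Gr /\
  exists delta, 0 <= delta /\
    forall (x y z w : vert Gr) dxy dxz dyz dwx dwy dwz,
      is_dist x y dxy -> is_dist x z dxz -> is_dist y z dyz ->
      is_dist w x dwx -> is_dist w y dwy -> is_dist w z dwz ->
      gprod dxy dwx dwy >= Rmin (gprod dxz dwx dwz) (gprod dyz dwy dwz) - delta.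

Definition cayley {G : Group} (S : G -> Prop) : wgraph :=
  {| vert := carrier G; wedge := fun g g' l => l = 1 /\ exists s, S s /\ g' = gmul g s |}.

Definition rel_cayley {G : Group} (m : nat) (H : nat -> G -> Prop) (X : list G) : wgraph :=
  @cayley G (fun s => In s X \/ exists i, (i < m)%nat /\ H i s).

Definition coset_graph {G : Group} (m : nat) (H : nat -> G -> Prop) (X : list G) : wgraph :=
  {| vert := @Coset G m H;
     wedge := fun C D l => l = 1 /\ proj1_sig C <> proj1_sig D /\
        exists a b x, proj1_sig C a /\ proj1_sig D b /\
          (In x X \/ In (ginv x) X \/ x = gone) /\ b = gmul a x |}.

Definition coned_off {G : Group} (m : nat) (H : nat -> G -> Prop) (X : list G) : wgraph :=
  {| vert := (carrier G + @Coset G m H)%type;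
     wedge := fun u v l =>
       match u, v with
       | inl g, inl g' => l = 1 /\ exists s, In s X /\ g' = gmul g s
       | inl g, inr C => l = 1/2 /\ proj1_sig C g
       | _, _ => False
       end |}.

From Stdlib Require Import Reals List.
From Stdlib Require Import Arith Lia Lra Wf_nat ClassicalEpsilon Classical ProofIrrelevance.

(* Both equivalences rest on the quasi-isometry invariance of hyperbolicity for graphs.
   The relative Cayley graph and the coset graph are quasi-isometric through g |-> g H_0
   and C |-> (an element of C): these maps move adjacent vertices at most 2, resp. 3, apart
   and are mutually inverse up to distance 1.  Invariance goes through slim triangles: the
   four-point condition makes geodesic triangles slim; by the Morse lemma (bisection argument
   of Bridson-Haefliger III.H.1.7) the image of a geodesic under a quasi-isometry stays
   uniformly close to a geodesic, so slimness transfers, and slim triangles give back the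
   four-point condition.  The coned-off graph contains the relative Cayley graph
   isometrically, since an H_i-edge becomes a path of length 1/2 + 1/2 through a cone vertex,
   and every cone vertex is at distance 1/2 from it; so all distances, hence all Gromov
   products, change by a bounded amount. *)

Open Scope nat_scope.

Lemma least_nat (P : nat -> Prop) : (exists n, P n) -> exists n, P n /\ forall k, P k -> n <= k.
Proof.
  intros Hex.
  destruct (dec_inh_nat_subset_has_unique_least_element P (fun n => classic (P n)) Hex)
    as [n [Hn _]].
  now exists n.
Qed.

Lemma last_index (Q : nat -> Prop) n : Q 0 -> exists j, j <= n /\ Q j /\ (j = n \/ ~ Q (S j)).
Proof.
  intros Q0; induction n as [|n [j [Hj [Qj [->|NQ]]]]].
  - exists 0; auto.
  - destruct (classic (Q (S n))); [exists (S n) | exists n]; auto.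
  - exists j; auto.
Qed.

Lemma pow2_dominates_linear a b : exists K, forall k, 2 ^ k <= a * k + b -> k <= K.
Proof.
  assert (Sq : forall k, 4 <= k -> k * k <= 2 ^ k).
  { intros k Hk; induction Hk; [simpl; lia|]. rewrite Nat.pow_succ_r'. nia. }
  exists (a + b + 4). intros k Hk.
  destruct (le_lt_dec k (a + b + 4)); auto. specialize (Sq k ltac:(lia)). nia.
Qed.

Lemma pow2_cover n : exists k, n <= 2 ^ k /\ 2 ^ k <= 2 * n + 1.
Proof.
  destruct (least_nat (fun k => n <= 2 ^ k)) as [[|k] [Hk Hmin]].
  { exists n. pose proof (Nat.pow_gt_lin_r 2 n ltac:(lia)). lia. }
  - exists 0. simpl in *. lia.
  - exists (S k); split; auto. rewrite Nat.pow_succ_r'.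
    destruct (le_lt_dec n (2 ^ k)) as [h|h]; [specialize (Hmin k h)|]; lia.
Qed.

Section GraphMetric.
Variables (V : Type) (adj : V -> V -> Prop).

Definition linked (u v : V) : Prop := adj u v \/ adj v u.

Inductive npath : V -> V -> nat -> Prop :=
| npath_nil u : npath u u 0
| npath_cons u w v n : linked u w -> npath w v n -> npath u v (S n).

Definition graph_connected : Prop := forall u v, exists n, npath u v n.

Lemma npath_linked u v : linked u v -> npath u v 1.
Proof. intros; econstructor; eauto using npath_nil. Qed.

Lemma npath_cat u v w n k : npath u v n -> npath v w k -> npath u w (n + k).
Proof. induction 1; simpl; eauto using npath_cons. Qed.

Lemma npath_rev u v n : npath u v n -> npath v u n.
Proof.
  induction 1 as [|u w v n Huw _ IH]; [constructor|].
  rewrite <- Nat.add_1_r; apply (npath_cat _ _ _ _ _ IH), npath_linked.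
  destruct Huw; [right|left]; assumption.
Qed.

Lemma npath_vertices u v n : npath u v n -> exists p : nat -> V,
  p 0 = u /\ p n = v /\ forall i, i < n -> linked (p i) (p (S i)).
Proof.
  induction 1 as [u|u w v n Huw _ [p [P0 [Pn Ps]]]].
  - exists (fun _ => u); repeat split; intros; lia.
  - exists (fun i => match i with 0 => u | S i' => p i' end).
    repeat split; auto. intros [|i] Hi; [subst; auto | apply Ps; lia].
Qed.

Definition gdist (u v : V) : nat :=
  epsilon (inhabits 0) (fun n => npath u v n /\ forall k, npath u v k -> n <= k).

Hypothesis conn : graph_connected.

Lemma gdist_spec u v : npath u v (gdist u v) /\ forall k, npath u v k -> gdist u v <= k.
Proof. unfold gdist; apply epsilon_spec, least_nat, conn. Qed.

Lemma npath_gdist u v : npath u v (gdist u v).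
Proof. apply gdist_spec. Qed.

Lemma gdist_min u v n : npath u v n -> gdist u v <= n.
Proof. apply gdist_spec. Qed.

Lemma gdist_xx u : gdist u u = 0.
Proof. pose proof (gdist_min u u 0 (npath_nil u)); lia. Qed.

Lemma gdist_sym u v : gdist u v = gdist v u.
Proof.
  apply Nat.le_antisymm; apply gdist_min, npath_rev, npath_gdist.
Qed.

Lemma gdist_triangle u v w : gdist u w <= gdist u v + gdist v w.
Proof. apply gdist_min, (npath_cat _ v); apply npath_gdist. Qed.

Lemma gdist_linked u v : linked u v -> gdist u v <= 1.
Proof. intros; apply gdist_min, npath_linked; assumption. Qed.

Lemma gdist_seq_le (c : nat -> V) (A N : nat) :
  (forall i, i < N -> gdist (c i) (c (S i)) <= A) ->
  forall i j, i <= j -> j <= N -> gdist (c i) (c j) <= A * (j - i).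
Proof.
  intros Hc i j Hij HjN; induction j as [|j IH].
  - replace i with 0 by lia; rewrite gdist_xx; lia.
  - destruct (Nat.eq_dec i (S j)) as [->|]; [rewrite gdist_xx; lia|].
    pose proof (gdist_triangle (c i) (c j) (c (S j))).
    pose proof (Hc j ltac:(lia)). specialize (IH ltac:(lia) ltac:(lia)). nia.
Qed.

Definition geodesic (x y : V) (g : nat -> V) : Prop :=
  g 0 = x /\ g (gdist x y) = y /\
  forall i j, i <= gdist x y -> j <= gdist x y -> gdist (g i) (g j) = i - j + (j - i).

Lemma geodesic_exists x y : exists g, geodesic x y g.
Proof.
  destruct (npath_vertices _ _ _ (npath_gdist x y)) as [p [P0 [Pn Ps]]].
  set (n := gdist x y) in *.
  assert (Hle : forall i j, i <= j -> j <= n -> gdist (p i) (p j) <= j - i).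
  { intros i j Hij Hj.
    pose proof (gdist_seq_le p 1 n (fun i Hi => gdist_linked _ _ (Ps i Hi)) i j Hij Hj); lia. }
  assert (Heq : forall i j, i <= j -> j <= n -> gdist (p i) (p j) = j - i).
  { intros i j Hij Hj.
    pose proof (Hle 0 i ltac:(lia) ltac:(lia)). pose proof (Hle i j Hij Hj).
    pose proof (Hle j n Hj ltac:(lia)).
    pose proof (gdist_triangle (p 0) (p i) (p n)). pose proof (gdist_triangle (p i) (p j) (p n)).
    rewrite P0, Pn in *. unfold n in *. lia. }
  exists p; repeat split; auto. intros i j Hi Hj.
  destruct (le_lt_dec i j); [rewrite Heq | rewrite gdist_sym, Heq]; lia.
Qed.

Lemma geodesic_ends x y g i : geodesic x y g -> i <= gdist x y ->
  gdist x (g i) = i /\ gdist (g i) y = gdist x y - i.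
Proof.
  intros [G0 [G1 G2]] Hi; split.
  - pose proof (G2 0 i ltac:(lia) Hi) as E; rewrite G0 in E; lia.
  - pose proof (G2 i (gdist x y) Hi ltac:(lia)) as E; rewrite G1 in E; lia.
Qed.

Lemma geodesic_rev x y g : geodesic x y g -> geodesic y x (fun i => g (gdist x y - i)).
Proof.
  intros [G0 [G1 G2]]; unfold geodesic; rewrite (gdist_sym y x); repeat split.
  - now rewrite Nat.sub_0_r.
  - now rewrite Nat.sub_diag.
  - intros i j Hi Hj; rewrite G2; lia.
Qed.

Lemma geodesic_sub x y g a b : geodesic x y g -> a <= b -> b <= gdist x y ->
  geodesic (g a) (g b) (fun t => g (a + t)).
Proof.
  intros [G0 [G1 G2]] Hab Hb.
  assert (E : gdist (g a) (g b) = b - a) by (rewrite G2; lia).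
  unfold geodesic; rewrite E; repeat split.
  - now rewrite Nat.add_0_r.
  - f_equal; lia.
  - intros i j Hi Hj; rewrite G2; lia.
Qed.

Definition four_point (delta : nat) : Prop := forall x y z w,
  gdist x y + gdist z w <= Nat.max (gdist x z + gdist y w) (gdist x w + gdist y z) + 2 * delta.

Definition slim (s : nat) : Prop := forall x y z a b c,
  geodesic x y a -> geodesic y z b -> geodesic x z c ->
  forall i, i <= gdist x y -> exists j,
    (j <= gdist y z /\ gdist (a i) (b j) <= s) \/ (j <= gdist x z /\ gdist (a i) (c j) <= s).

Lemma four_point_geodesic_near delta : four_point delta -> forall x z c p, geodesic x z c ->
  exists j, j <= gdist x z /\
    2 * gdist p (c j) <= gdist p x + gdist p z - gdist x z + 1 + 4 * delta.
Proof.
  intros F x z c p Hc.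
  pose proof (gdist_triangle x p z). pose proof (gdist_triangle p x z).
  pose proof (gdist_triangle x z p).
  rewrite (gdist_sym x p), (gdist_sym z p) in *.
  (* the point of [c] at distance (p|z)_x from x *)
  set (j := (gdist p x + gdist x z - gdist p z) / 2).
  assert (Hj2 : 2 * j <= gdist p x + gdist x z - gdist p z <= 2 * j + 1).
  { pose proof (Nat.div_mod (gdist p x + gdist x z - gdist p z) 2 ltac:(lia)) as M1.
    pose proof (Nat.mod_upper_bound (gdist p x + gdist x z - gdist p z) 2 ltac:(lia)) as M2.
    fold j in M1. lia. }
  assert (Hj : j <= gdist x z) by lia.
  exists j; split; auto.
  destruct (geodesic_ends _ _ _ j Hc Hj) as [E1 E2].
  pose proof (F p (c j) x z) as Q.
  rewrite (gdist_sym (c j) x), E1, E2 in Q. lia.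
Qed.

Lemma four_point_slim delta : four_point delta -> slim (3 * delta + 1).
Proof.
  intros F x y z a b c Ha Hb Hc i Hi.
  destruct (geodesic_ends _ _ _ i Ha Hi) as [Dx Dy].
  pose proof (F x y z (a i)) as Q.
  rewrite (gdist_sym z (a i)), (gdist_sym y (a i)) in Q.
  destruct (le_lt_dec (gdist x y + gdist (a i) z) (gdist x z + gdist (a i) y + 2 * delta)).
  - destruct (four_point_geodesic_near delta F x z c (a i) Hc) as [j [Hj Hd]].
    exists j; right; split; auto. rewrite (gdist_sym (a i) x) in Hd. lia.
  - destruct (four_point_geodesic_near delta F y z b (a i) Hb) as [j [Hj Hd]].
    exists j; left; split; auto. lia.
Qed.

Lemma slim_projection s : slim s -> forall w x y a, geodesic x y a ->
  exists i, i <= gdist x y /\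
    2 * gdist w (a i) <= gdist w x + gdist w y - gdist x y + 4 * s + 2.
Proof.
  intros Sl w x y a Ha.
  destruct (geodesic_exists y w) as [b Hb]. destruct (geodesic_exists x w) as [c Hc].
  (* the last point of [a] that is s-close to the side [c] is also (s+1)-close to [b] *)
  destruct (last_index (fun i => exists j, j <= gdist x w /\ gdist (a i) (c j) <= s) (gdist x y))
    as [i [Hi [[j [Hj Hdj]] Hend]]].
  { exists 0. destruct Ha as [-> _], Hc as [-> _]. rewrite gdist_xx. lia. }
  assert (Hb' : exists j', j' <= gdist y w /\ gdist (a i) (b j') <= s + 1).
  { destruct (Nat.eq_dec i (gdist x y)) as [->|Hne].
    - exists 0. destruct Ha as [_ [-> _]], Hb as [-> _]. rewrite gdist_xx. lia.
    - destruct Hend as [|NQ]; [lia|].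
      destruct (Sl x y w a b c Ha Hb Hc (S i) ltac:(lia)) as [j' [[Hj' Hd']|[Hj' Hd']]].
      + exists j'; split; auto. pose proof (gdist_triangle (a i) (a (S i)) (b j')).
        pose proof Ha as [_ [_ A2]]. rewrite (A2 i (S i)) in *; lia.
      + exfalso. apply NQ. eauto. }
  destruct Hb' as [j' [Hj' Hdj']].
  exists i; split; auto.
  destruct (geodesic_ends _ _ _ i Ha Hi) as [E1 E2].
  destruct (geodesic_ends _ _ _ j Hc Hj) as [E3 E4].
  destruct (geodesic_ends _ _ _ j' Hb Hj') as [E5 E6].
  pose proof (gdist_triangle x (c j) (a i)). pose proof (gdist_triangle (a i) (b j') y).
  pose proof (gdist_triangle w (c j) (a i)). pose proof (gdist_triangle w (b j') (a i)).
  pose proof (gdist_triangle x w y).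
  rewrite (gdist_sym (b j') y), E5 in *. rewrite (gdist_sym w (c j)), E4 in *.
  rewrite (gdist_sym w (b j')), E6 in *.
  rewrite (gdist_sym (c j) (a i)), (gdist_sym (b j') (a i)) in *.
  rewrite (gdist_sym w x), (gdist_sym w y) in *. lia.
Qed.

Lemma slim_four_point s : slim s -> four_point (3 * s + 1).
Proof.
  intros Sl x y z w.
  destruct (geodesic_exists x y) as [a Ha]. destruct (geodesic_exists y z) as [b Hb].
  destruct (geodesic_exists x z) as [c Hc].
  destruct (slim_projection s Sl w x y a Ha) as [i [Hi Hp]].
  pose proof (gdist_triangle x w y).
  destruct (Sl x y z a b c Ha Hb Hc i Hi) as [j [[Hj Hd]|[Hj Hd]]].
  - destruct (geodesic_ends _ _ _ j Hb Hj) as [E1 E2].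
    pose proof (gdist_triangle w (b j) y). pose proof (gdist_triangle w (b j) z).
    pose proof (gdist_triangle w (a i) (b j)).
    rewrite (gdist_sym (b j) y), E1, E2 in *.
    rewrite (gdist_sym z w), (gdist_sym y w), (gdist_sym x w) in *. lia.
  - destruct (geodesic_ends _ _ _ j Hc Hj) as [E1 E2].
    pose proof (gdist_triangle w (c j) x). pose proof (gdist_triangle w (c j) z).
    pose proof (gdist_triangle w (a i) (c j)).
    rewrite (gdist_sym (c j) x), E1, E2 in *.
    rewrite (gdist_sym z w), (gdist_sym y w), (gdist_sym x w) in *. lia.
Qed.

Definition coarse_path (A N : nat) (c : nat -> V) : Prop :=
  forall i, i < N -> gdist (c i) (c (S i)) <= A.

Definition qi_lower (L N : nat) (c : nat -> V) : Prop :=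
  forall i j, i <= N -> j <= N -> i - j + (j - i) <= L * gdist (c i) (c j) + L.

Lemma geodesic_coarse_path A x y g : 1 <= A -> geodesic x y g -> coarse_path A (gdist x y) g.
Proof. intros HA [_ [_ G]] t Ht. rewrite G; lia. Qed.

Definition concat (n1 : nat) (p1 p2 : nat -> V) : nat -> V :=
  fun t => if t <? n1 then p1 t else p2 (t - n1).

Lemma concat_coarse_path A n1 n2 p1 p2 : coarse_path A n1 p1 -> coarse_path A n2 p2 ->
  p1 n1 = p2 0 ->
  coarse_path A (n1 + n2) (concat n1 p1 p2) /\
  concat n1 p1 p2 0 = p1 0 /\ concat n1 p1 p2 (n1 + n2) = p2 n2 /\
  forall t, t <= n1 + n2 -> (exists u, u <= n1 /\ concat n1 p1 p2 t = p1 u) \/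
                            (exists u, u <= n2 /\ concat n1 p1 p2 t = p2 u).
Proof.
  intros H1 H2 E. unfold concat. repeat split.
  - intros t Ht. destruct (Nat.ltb_spec t n1), (Nat.ltb_spec (S t) n1); try lia.
    + apply H1; lia.
    + replace n1 with (S t) in * by lia. rewrite Nat.sub_diag, <- E. apply H1; lia.
    + replace (S t - n1) with (S (t - n1)) by lia. apply H2; lia.
  - destruct (Nat.ltb_spec 0 n1); auto. replace n1 with 0 in * by lia. now rewrite E.
  - destruct (Nat.ltb_spec (n1 + n2) n1); [lia|]. f_equal; lia.
  - intros t Ht. destruct (Nat.ltb_spec t n1).
    + left. exists t; split; auto; lia.
    + right. exists (t - n1); split; auto; lia.
Qed.

Lemma coarse_path_segment A N c i1 i2 : coarse_path A N c -> i1 <= N -> i2 <= N ->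
  exists c', coarse_path A (i1 - i2 + (i2 - i1)) c' /\ c' 0 = c i1 /\
    c' (i1 - i2 + (i2 - i1)) = c i2 /\
    forall t, t <= i1 - i2 + (i2 - i1) -> exists i, i <= N /\ c' t = c i.
Proof.
  intros Hc H1 H2. destruct (Nat.leb_spec i1 i2).
  - exists (fun t => c (i1 + t)). repeat split; try (f_equal; lia).
    + intros t Ht. rewrite Nat.add_succ_r. apply Hc. lia.
    + intros t Ht. exists (i1 + t); split; auto; lia.
  - exists (fun t => c (i1 - t)). repeat split; try (f_equal; lia).
    + intros t Ht. rewrite gdist_sym. replace (i1 - t) with (S (i1 - S t)) by lia. apply Hc. lia.
    + intros t Ht. exists (i1 - t); split; auto; lia.
Qed.

Lemma detour A N c i1 i2 x y s1 s2 : 1 <= A -> coarse_path A N c -> i1 <= N -> i2 <= N ->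
  geodesic x (c i1) s1 -> geodesic (c i2) y s2 ->
  let n := gdist x (c i1) + (i1 - i2 + (i2 - i1)) + gdist (c i2) y in
  exists P, coarse_path A n P /\ P 0 = x /\ P n = y /\
    forall t, t <= n -> (exists u, u <= gdist x (c i1) /\ P t = s1 u) \/
                        (exists i, i <= N /\ P t = c i) \/
                        (exists u, u <= gdist (c i2) y /\ P t = s2 u).
Proof.
  intros HA Hc Hi1 Hi2 Hs1 Hs2 n.
  destruct (coarse_path_segment A N c i1 i2 Hc Hi1 Hi2) as [cm [Cp [C0 [C1 C2]]]].
  pose proof Hs1 as [S10 [S11 _]]. pose proof Hs2 as [S20 [S21 _]].
  destruct (concat_coarse_path A _ _ s1 cm (geodesic_coarse_path A _ _ _ HA Hs1) Cp
              (eq_trans S11 (eq_sym C0))) as [P1p [P10 [P1e P1pts]]].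
  destruct (concat_coarse_path A _ _ _ s2 P1p (geodesic_coarse_path A _ _ _ HA Hs2)
              (eq_trans P1e (eq_trans C1 (eq_sym S20)))) as [Pp [P0 [Pe Ppts]]].
  unfold n. eexists; split; [exact Pp|]. rewrite P0, P10, S10, Pe, S21. repeat split; auto.
  intros t Ht. destruct (Ppts t Ht) as [[u [Hu ->]]|[u [Hu ->]]]; [|right; right; eauto].
  destruct (P1pts u Hu) as [[u' [Hu' ->]]|[u' [Hu' ->]]]; [left; eauto|].
  right; left. apply C2; assumption.
Qed.

Lemma far_anchor N c D p q :
  (forall i, i <= N -> D <= gdist p (c i)) ->
  (exists i, i <= N /\ q = c i) \/
  (2 * D <= gdist p q /\ exists i, i <= N /\ gdist q (c i) <= D) ->
  exists i h, i <= N /\ geodesic q (c i) h /\ gdist q (c i) <= D /\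
    forall t, t <= gdist q (c i) -> D <= gdist p (h t).
Proof.
  intros Hfar [[i [Hi Eq]]|[Hpq [i [Hi Hqi]]]];
    destruct (geodesic_exists q (c i)) as [h Hh]; exists i, h; do 3 (split; auto).
  - subst q. rewrite gdist_xx; lia.
  - subst q. rewrite gdist_xx. intros t Ht. replace t with 0 by lia.
    destruct Hh as [-> _]. auto.
  - intros t Ht. destruct (geodesic_ends _ _ _ t Hh Ht) as [E _].
    pose proof (gdist_triangle p (h t) q). rewrite (gdist_sym (h t) q) in *. lia.
Qed.

Section Morse.
Variables (s A L : nat).
Hypothesis Sl : slim s.
Hypothesis HA : 1 <= A.

Lemma geodesic_near_short_path N c g : N <= 1 -> coarse_path A N c ->
  geodesic (c 0) (c N) g ->
  forall j, j <= gdist (c 0) (c N) -> exists i, i <= N /\ gdist (g j) (c i) <= A.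
Proof.
  intros HN Hc Hg j Hj. exists 0; split; [lia|].
  destruct (geodesic_ends _ _ _ j Hg Hj) as [E _].
  rewrite gdist_sym, E.
  destruct N as [|[|]]; [rewrite gdist_xx in Hj | specialize (Hc 0 ltac:(lia)) |]; lia.
Qed.

(* Bisection: a geodesic and an A-coarse path of length at most 2^k with the same
   endpoints span k nested slim triangles. *)
Lemma geodesic_near_coarse_path k : forall N c g, N <= 2 ^ k -> coarse_path A N c ->
  geodesic (c 0) (c N) g ->
  forall j, j <= gdist (c 0) (c N) -> exists i, i <= N /\ gdist (g j) (c i) <= s * k + A.
Proof.
  induction k as [|k IHk]; intros N c g HN Hc Hg j Hj.
  { destruct (geodesic_near_short_path N c g HN Hc Hg j Hj) as [i [Hi Hd]].
    exists i; split; auto; lia. }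
  destruct (le_lt_dec N 1) as [Hs|Hl].
  { destruct (geodesic_near_short_path N c g Hs Hc Hg j Hj) as [i [Hi Hd]].
    exists i; split; auto; lia. }
  set (M := N / 2).
  assert (HM : 2 * M <= N <= 2 * M + 1).
  { pose proof (Nat.div_mod N 2 ltac:(lia)) as M1.
    pose proof (Nat.mod_upper_bound N 2 ltac:(lia)). fold M in M1. lia. }
  rewrite Nat.pow_succ_r' in HN.
  destruct (geodesic_exists (c 0) (c M)) as [b Hb].
  destruct (geodesic_exists (c M) (c N)) as [b' Hb'].
  destruct (Sl _ _ _ g _ b Hg (geodesic_rev _ _ _ Hb') Hb j Hj) as [j' [[Hj' Hd]|[Hj' Hd]]].
  - set (c' := fun t => c (M + t)).
    assert (Hc' : coarse_path A (N - M) c').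
    { intros t Ht. unfold c'. rewrite Nat.add_succ_r. apply Hc. lia. }
    assert (Ec' : c' 0 = c M /\ c' (N - M) = c N)
      by (unfold c'; split; f_equal; lia).
    rewrite (gdist_sym (c N) (c M)) in Hj'.
    destruct (IHk (N - M) c' b' ltac:(lia) Hc' ltac:(rewrite (proj1 Ec'), (proj2 Ec'); auto)
                (gdist (c M) (c N) - j') ltac:(rewrite (proj1 Ec'), (proj2 Ec'); lia))
      as [i [Hi Hdi]].
    exists (M + i); split; [lia|].
    pose proof (gdist_triangle (g j) (b' (gdist (c M) (c N) - j')) (c (M + i))).
    unfold c' in Hdi. lia.
  - destruct (IHk M c b ltac:(lia) ltac:(intros t Ht; apply Hc; lia) Hb j' Hj')
      as [i [Hi Hdi]].
    exists i; split; [lia|].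
    pose proof (gdist_triangle (g j) (b j') (c i)). lia.
Qed.

(* If [g j0] is the geodesic point farthest from [c], at distance D, detour around it
   through the path: the detour has length O(D) yet stays D-far from [g j0], so by
   bisection D = O(log D). *)
Lemma far_point_log_bound N c g D j0 :
  coarse_path A N c -> qi_lower L N c -> geodesic (c 0) (c N) g ->
  j0 <= gdist (c 0) (c N) ->
  (forall j, j <= gdist (c 0) (c N) -> exists i, i <= N /\ gdist (g j) (c i) <= D) ->
  (forall i, i <= N -> D <= gdist (g j0) (c i)) ->
  exists k, D <= s * k + A /\ 2 ^ k <= 2 * ((6 * L + 2) * D + L) + 1.
Proof.
  intros Hc Hq Hg Hj0 Hnear Hfar.
  pose proof Hg as [G0 [G1 G2]].
  set (n := gdist (c 0) (c N)) in *.
  set (jy := j0 - 2 * D). set (jz := Nat.min (j0 + 2 * D) n).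
  destruct (far_anchor N c D (g j0) (g jy) Hfar) as [i1 [h1 [Hi1 [Hh1 [Ha Fh1]]]]].
  { destruct (Nat.eq_dec jy 0) as [E|E].
    - left. exists 0. rewrite E, G0. split; auto; lia.
    - right. split; [rewrite G2; unfold jy in *; lia | apply Hnear; unfold jy; lia]. }
  destruct (far_anchor N c D (g j0) (g jz) Hfar) as [i2 [h2 [Hi2 [Hh2 [He Fh2]]]]].
  { destruct (Nat.eq_dec jz n) as [E|E].
    - left. exists N. rewrite E, G1. split; auto.
    - right. split; [rewrite G2; unfold jz in *; lia | apply Hnear; unfold jz; lia]. }
  pose proof (gdist_sym (c i2) (g jz)) as Sz.
  destruct (detour A N c i1 i2 _ _ h1 _ HA Hc Hi1 Hi2 Hh1 (geodesic_rev _ _ _ Hh2))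
    as [P [Pp [P0 [Pe Ppts]]]].
  set (len := gdist (g jy) (c i1) + (i1 - i2 + (i2 - i1)) + gdist (c i2) (g jz)) in *.
  assert (Far : forall t, t <= len -> D <= gdist (g j0) (P t)).
  { intros t Ht.
    destruct (Ppts t Ht) as [[u [Hu ->]]|[[i [Hi ->]]|[u [Hu ->]]]]; auto.
    apply Fh2; lia. }
  pose proof (geodesic_sub _ _ _ jy jz Hg ltac:(unfold jy, jz; lia) ltac:(unfold jz; lia))
    as Hsub.
  rewrite <- P0, <- Pe in Hsub.
  destruct (pow2_cover len) as [k [Hk1 Hk2]].
  assert (Djj : gdist (g jy) (g jz) = jz - jy) by (rewrite G2; unfold jz in *; lia).
  destruct (geodesic_near_coarse_path k len P _ Hk1 Pp Hsub (j0 - jy)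
              ltac:(rewrite P0, Pe, Djj; unfold jy, jz; lia)) as [t [Ht Hdt]].
  replace (jy + (j0 - jy)) with j0 in Hdt by (unfold jy; lia).
  exists k; split; [specialize (Far t Ht); lia|].
  assert (Hb : i1 - i2 + (i2 - i1) <= L * (6 * D) + L).
  { pose proof (Hq i1 i2 Hi1 Hi2).
    pose proof (gdist_triangle (c i1) (g jy) (c i2)).
    pose proof (gdist_triangle (g jy) (g jz) (c i2)).
    rewrite (gdist_sym (c i1) (g jy)) in *.
    assert (Hd12 : gdist (c i1) (c i2) <= 6 * D) by (unfold jy, jz in *; lia).
    pose proof (Nat.mul_le_mono_l _ _ L Hd12). lia. }
  unfold len in Hk2. lia.
Qed.

Lemma geodesic_near_quasi_path : exists K, forall N c g,
  coarse_path A N c -> qi_lower L N c -> geodesic (c 0) (c N) g ->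
  forall j, j <= gdist (c 0) (c N) -> exists i, i <= N /\ gdist (g j) (c i) <= K.
Proof.
  destruct (pow2_dominates_linear (2 * (6 * L + 2) * s) (2 * (6 * L + 2) * A + 2 * L + 1))
    as [K0 HK0].
  exists (s * K0 + A). intros N c g Hc Hq Hg.
  set (n := gdist (c 0) (c N)).
  destruct (least_nat (fun D => forall j, j <= n ->
              exists i, i <= N /\ gdist (g j) (c i) <= D)) as [D0 [HD0 Hmin]].
  { exists n. intros j Hj. exists 0; split; [lia|].
    destruct (geodesic_ends _ _ _ j Hg Hj) as [E _]. rewrite gdist_sym, E. auto. }
  enough (D0 <= s * K0 + A)
    by (intros j Hj; destruct (HD0 j Hj) as [i [? ?]]; exists i; split; lia).
  destruct D0 as [|D1]; [lia|].
  assert (Hex : exists j0, j0 <= n /\ forall i, i <= N -> S D1 <= gdist (g j0) (c i)).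
  { apply NNPP. intros Hno.
    enough (S D1 <= D1) by lia. apply Hmin. intros j Hj.
    apply NNPP. intros Hni. apply Hno. exists j; split; auto.
    intros i Hi. apply Nat.nle_gt. intros Hle. apply Hni. eauto. }
  destruct Hex as [j0 [Hj0 Hfar]].
  destruct (far_point_log_bound N c g (S D1) j0 Hc Hq Hg Hj0 HD0 Hfar) as [k [Hk1 Hk2]].
  assert (Hk : k <= K0).
  { apply HK0. pose proof (Nat.mul_le_mono_l _ _ (6 * L + 2) Hk1). nia. }
  pose proof (Nat.mul_le_mono_l _ _ s Hk). lia.
Qed.

Lemma quasi_path_near_geodesic : exists K, forall N c g,
  coarse_path A N c -> qi_lower L N c -> geodesic (c 0) (c N) g ->
  forall t, t <= N -> exists j, j <= gdist (c 0) (c N) /\ gdist (c t) (g j) <= K.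
Proof.
  destruct geodesic_near_quasi_path as [K2 HK2].
  exists (K2 + A * (L * (2 * K2 + 1) + L)). intros N c g Hc Hq Hg t Ht.
  pose proof Hg as [G0 [G1 G2]].
  set (n := gdist (c 0) (c N)) in *.
  destruct (last_index (fun j => exists i, i <= t /\ gdist (g j) (c i) <= K2) n)
    as [j [Hj [[i1 [Hi1 Hd1]] Hend]]].
  { exists 0. rewrite G0, gdist_xx. lia. }
  assert (Hi2 : exists i2, t <= i2 <= N /\ gdist (c i1) (c i2) <= 2 * K2 + 1).
  { destruct (Nat.eq_dec j n) as [->|Hne].
    - exists N. rewrite G1, gdist_sym in Hd1. lia.
    - destruct Hend as [|NQ]; [lia|].
      destruct (HK2 N c g Hc Hq Hg (S j) ltac:(lia)) as [i2 [Hi2 Hd2]].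
      exists i2. split.
      + destruct (le_lt_dec i2 t); [|lia]. exfalso. apply NQ. eauto.
      + pose proof (G2 j (S j) Hj ltac:(lia)).
        pose proof (gdist_triangle (c i1) (g j) (c i2)).
        pose proof (gdist_triangle (g j) (g (S j)) (c i2)).
        rewrite (gdist_sym (c i1) (g j)) in *. lia. }
  destruct Hi2 as [i2 [Ht2 Hd12]].
  exists j; split; auto.
  pose proof (Hq i2 i1 ltac:(lia) ltac:(lia)).
  pose proof (gdist_seq_le c A N Hc i1 t Hi1 Ht).
  pose proof (gdist_triangle (c t) (c i1) (g j)).
  rewrite (gdist_sym (c t) (c i1)), (gdist_sym (c i1) (g j)) in *.
  rewrite (gdist_sym (c i2) (c i1)) in *.
  pose proof (Nat.mul_le_mono_l _ _ L Hd12).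
  assert (A * (t - i1) <= A * (L * (2 * K2 + 1) + L)) by (apply Nat.mul_le_mono_l; lia).
  lia.
Qed.

End Morse.
End GraphMetric.

Lemma gdist_lipschitz (V W : Type) (aV : V -> V -> Prop) (aW : W -> W -> Prop) (h : V -> W)
  (A : nat) : graph_connected V aV -> graph_connected W aW ->
  (forall u v, linked V aV u v -> gdist W aW (h u) (h v) <= A) ->
  forall u v, gdist W aW (h u) (h v) <= A * gdist V aV u v.
Proof.
  intros cV cW Hh u v.
  destruct (npath_vertices V aV _ _ _ (npath_gdist V aV cV u v)) as [p [P0 [Pn Ps]]].
  pose proof (gdist_seq_le W aW cW (fun i => h (p i)) A (gdist V aV u v)
                (fun i Hi => Hh _ _ (Ps i Hi)) 0 (gdist V aV u v) ltac:(lia) ltac:(lia)) as Hp.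
  simpl in Hp. rewrite P0, Pn in Hp. lia.
Qed.

Section QuasiIsometryInvariance.
Variables (V W : Type) (aV : V -> V -> Prop) (aW : W -> W -> Prop).
Hypothesis cV : graph_connected V aV.
Hypothesis cW : graph_connected W aW.
Variables (f : V -> W) (g : W -> V) (A1 A2 B : nat).
Hypothesis f_linked : forall u v, linked V aV u v -> gdist W aW (f u) (f v) <= A1.
Hypothesis g_linked : forall u v, linked W aW u v -> gdist V aV (g u) (g v) <= A2.
Hypothesis fg_near : forall w, gdist W aW (f (g w)) w <= B.

Local Notation dV := (gdist V aV).
Local Notation dW := (gdist W aW).

Lemma dW_le_dV_image u v r : dV (g u) (g v) <= r -> dW u v <= A1 * r + 2 * B.
Proof.
  intros Huv.
  pose proof (gdist_lipschitz V W aV aW f A1 cV cW f_linked (g u) (g v)).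
  pose proof (fg_near u). pose proof (fg_near v).
  pose proof (gdist_triangle W aW cW u (f (g u)) v).
  pose proof (gdist_triangle W aW cW (f (g u)) (f (g v)) v).
  rewrite (gdist_sym W aW cW u (f (g u))) in *.
  pose proof (Nat.mul_le_mono_l _ _ A1 Huv). lia.
Qed.

Lemma geodesic_image x y a : geodesic W aW x y a ->
  coarse_path V aV (A2 + 1) (dW x y) (fun i => g (a i)) /\
  qi_lower V aV (A1 + 2 * B) (dW x y) (fun i => g (a i)).
Proof.
  intros Ha. pose proof Ha as [_ [_ G2]]. split.
  - intros i Hi.
    pose proof (gdist_lipschitz W V aW aV g A2 cW cV g_linked (a i) (a (S i))).
    assert (E : dW (a i) (a (S i)) = 1) by (rewrite G2; lia).
    rewrite E in *; lia.
  - intros i j Hi Hj. rewrite <- G2 by auto.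
    pose proof (dW_le_dV_image (a i) (a j) _ (le_n _)). lia.
Qed.

Lemma slim_transfer s : slim V aV s -> exists s', slim W aW s'.
Proof.
  intros Sl.
  destruct (quasi_path_near_geodesic V aV cV s (A2 + 1) (A1 + 2 * B) Sl ltac:(lia))
    as [K1 HK1].
  destruct (geodesic_near_quasi_path V aV cV s (A2 + 1) (A1 + 2 * B) Sl ltac:(lia))
    as [K2 HK2].
  exists (A1 * (K1 + s + K2) + 2 * B).
  intros x y z a b c Ha Hb Hc i Hi.
  destruct (geodesic_image x y a Ha) as [Pa Qa].
  destruct (geodesic_image y z b Hb) as [Pb Qb].
  destruct (geodesic_image x z c Hc) as [Pc Qc].
  pose proof Ha as [A0 [A1' _]]. pose proof Hb as [B0 [B1 _]]. pose proof Hc as [C0 [C1 _]].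
  destruct (geodesic_exists V aV cV (g x) (g y)) as [a' Ha'].
  destruct (geodesic_exists V aV cV (g y) (g z)) as [b' Hb'].
  destruct (geodesic_exists V aV cV (g x) (g z)) as [c' Hc'].
  destruct (HK1 _ _ a' Pa Qa ltac:(cbv beta; rewrite A0, A1'; exact Ha') i Hi) as [j [Hj Hdj]].
  rewrite A0, A1' in Hj.
  destruct (Sl _ _ _ a' b' c' Ha' Hb' Hc' j Hj) as [j' [[Hj' Hd']|[Hj' Hd']]].
  - destruct (HK2 _ _ b' Pb Qb ltac:(cbv beta; rewrite B0, B1; exact Hb') j'
                ltac:(cbv beta; rewrite B0, B1; exact Hj')) as [i' [Hi' Hdi']].
    exists i'. left. split; auto. apply dW_le_dV_image.
    pose proof (gdist_triangle V aV cV (g (a i)) (a' j) (b' j')).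
    pose proof (gdist_triangle V aV cV (g (a i)) (b' j') (g (b i'))). lia.
  - destruct (HK2 _ _ c' Pc Qc ltac:(cbv beta; rewrite C0, C1; exact Hc') j'
                ltac:(cbv beta; rewrite C0, C1; exact Hj')) as [i' [Hi' Hdi']].
    exists i'. right. split; auto. apply dW_le_dV_image.
    pose proof (gdist_triangle V aV cV (g (a i)) (a' j) (c' j')).
    pose proof (gdist_triangle V aV cV (g (a i)) (c' j') (g (c i'))). lia.
Qed.

Lemma four_point_transfer delta : four_point V aV delta -> exists delta', four_point W aW delta'.
Proof.
  intros F. destruct (slim_transfer _ (four_point_slim V aV cV delta F)) as [s' Sl].
  exists (3 * s' + 1). apply slim_four_point; assumption.
Qed.

End QuasiIsometryInvariance.

Section GroupFacts.
Variable G : Group.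

Lemma gmul_inv_r (x : G) : gmul x (ginv x) = gone.
Proof.
  rewrite <- (gmul1 G (gmul x (ginv x))), <- (gmulV G (ginv x)) at 1.
  rewrite <- gmulA, (gmulA G (ginv x) x), gmulV, gmul1. apply gmulV.
Qed.

Lemma gmul_one_r (x : G) : gmul x gone = x.
Proof. rewrite <- (gmulV G x), gmulA, gmul_inv_r, gmul1. reflexivity. Qed.

Definition cayley_adj (S : G -> Prop) (u v : G) : Prop := exists s, S s /\ v = gmul u s.

Lemma npath_word (S : G -> Prop) l : (forall s, In s l -> S s \/ S (ginv s)) ->
  forall u, npath _ (cayley_adj S) u (gmul u (fold_right gmul gone l)) (length l).
Proof.
  induction l as [|s l IH]; intros Hl u; simpl.
  - rewrite gmul_one_r. constructor.
  - rewrite gmulA. econstructor; [|apply IH; intros; apply Hl; simpl; auto].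
    destruct (Hl s (or_introl eq_refl)) as [Hs|Hs].
    + left. exists s. auto.
    + right. exists (ginv s). split; auto. rewrite <- gmulA, gmul_inv_r, gmul_one_r. auto.
Qed.

Lemma generates_connected (S : G -> Prop) : generates S -> graph_connected _ (cayley_adj S).
Proof.
  intros Hg u v. destruct (Hg (gmul (ginv u) v)) as [l [Hl E]].
  exists (length l). pose proof (npath_word S l Hl u) as P.
  rewrite <- E, gmulA, gmul_inv_r, gmul1 in P. exact P.
Qed.

Lemma lcoset_self (K : G -> Prop) g : is_subgroup K -> lcoset g K g.
Proof. intros [K1 _]. exists gone. split; auto. now rewrite gmul_one_r. Qed.

Lemma lcoset_mul_r (K : G -> Prop) c a h : is_subgroup K -> lcoset c K a -> K h ->
  lcoset c K (gmul a h).
Proof.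
  intros [_ [K2 _]] [h1 [Hh1 ->]] Hh. exists (gmul h1 h). split; auto. symmetry; apply gmulA.
Qed.

Lemma lcoset_diff (K : G -> Prop) c a a' : is_subgroup K -> lcoset c K a -> lcoset c K a' ->
  exists h, K h /\ a' = gmul a h.
Proof.
  intros [_ [K2 K3]] [h1 [Hh1 ->]] [h2 [Hh2 ->]]. exists (gmul (ginv h1) h2). split; auto.
  rewrite gmulA, <- (gmulA G c h1), gmul_inv_r, gmul_one_r. reflexivity.
Qed.

End GroupFacts.

Section Within.
Variables (V : Type) (E : V -> V -> Prop).

Definition within (u v : V) (k : nat) : Prop := exists n, n <= k /\ npath V E u v n.

Lemma within_refl u : within u u 0.
Proof. exists 0. split; auto. constructor. Qed.

Lemma within_linked u v : linked V E u v -> within u v 1.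
Proof. intros. exists 1. split; auto. apply npath_linked; assumption. Qed.

Lemma within_trans u v w k k' : within u v k -> within v w k' -> within u w (k + k').
Proof.
  intros [n [Hn P]] [n' [Hn' P']]. exists (n + n'). split; [lia | eapply npath_cat; eauto].
Qed.

Lemma within_sym u v k : within u v k -> within v u k.
Proof. intros [n [Hn P]]. exists n. split; auto. apply npath_rev; assumption. Qed.

Lemma within_mono u v k k' : k <= k' -> within u v k -> within u v k'.
Proof. intros Hk [n [Hn P]]. exists n. split; auto. lia. Qed.

Lemma gdist_le_within u v k : graph_connected V E -> within u v k -> gdist V E u v <= k.
Proof. intros C [n [Hn P]]. pose proof (gdist_min V E C _ _ _ P). lia. Qed.

Lemma within_map (W : Type) (EW : W -> W -> Prop) (f : W -> V) k :
  (forall u v, linked W EW u v -> within (f u) (f v) k) ->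
  forall u v n, npath W EW u v n -> within (f u) (f v) (k * n).
Proof.
  intros Hf u v n P. induction P as [u|u w v n Huw _ IH].
  - rewrite Nat.mul_0_r. apply within_refl.
  - replace (k * S n) with (k + k * n) by lia. eapply within_trans; eauto.
Qed.

End Within.

Section CosetGraph.
Variables (G : Group) (m : nat) (H : nat -> G -> Prop) (X : list G).
Hypothesis m_pos : 0 < m.
Hypothesis H_sub : forall i, i < m -> is_subgroup (H i).

Definition rel_gens (s : G) : Prop := In s X \/ exists i, i < m /\ H i s.

Definition coset_label (x : G) : Prop := In x X \/ In (ginv x) X \/ x = gone.

Definition coset_adj (C D : Coset m H) : Prop := proj1_sig C <> proj1_sig D /\
  exists a b x, proj1_sig C a /\ proj1_sig D b /\ coset_label x /\ b = gmul a x.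

Local Notation rel_adj := (cayley_adj G rel_gens).

Definition coset_of i (Hi : i < m) (u : G) : Coset m H :=
  exist _ (lcoset u (H i)) (ex_intro _ i (ex_intro _ u (conj Hi eq_refl))).

Definition coset0 : G -> Coset m H := coset_of 0 m_pos.

Lemma coset_has_rep (C : Coset m H) :
  exists g, exists i, i < m /\ proj1_sig C = lcoset g (H i).
Proof. destruct C as [C [i [g [Hi E]]]]. eauto. Qed.

Definition coset_rep (C : Coset m H) : G :=
  proj1_sig (constructive_indefinite_description _ (coset_has_rep C)).

Lemma coset_rep_spec C : exists i, i < m /\ proj1_sig C = lcoset (coset_rep C) (H i).
Proof.
  unfold coset_rep. destruct (constructive_indefinite_description _ _) as [g Hg]. exact Hg.
Qed.

Lemma coset_rep_mem C : proj1_sig C (coset_rep C).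
Proof. destruct (coset_rep_spec C) as [i [Hi ->]]. apply lcoset_self, H_sub, Hi. Qed.

Lemma coset_eq (C D : Coset m H) : proj1_sig C = proj1_sig D -> C = D.
Proof.
  destruct C as [C pC], D as [D pD]. simpl. intros <-. f_equal. apply proof_irrelevance.
Qed.

Lemma coset_label_within C D a x : proj1_sig C a -> proj1_sig D (gmul a x) -> coset_label x ->
  within _ coset_adj C D 1.
Proof.
  intros Ha Hb Hx. destruct (classic (proj1_sig C = proj1_sig D)) as [E|E].
  - apply coset_eq in E as <-. apply (within_mono _ _ _ _ 0); auto. apply within_refl.
  - apply within_linked. left. split; auto. exists a, (gmul a x), x. auto.
Qed.

Lemma coset_meet_within C D a : proj1_sig C a -> proj1_sig D a -> within _ coset_adj C D 1.
Proof.
  intros Ha Hb. apply (coset_label_within C D a gone Ha); [|right; right; auto].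
  now rewrite gmul_one_r.
Qed.

Lemma rel_linked_coset0 u v : linked _ rel_adj u v -> within _ coset_adj (coset0 u) (coset0 v) 2.
Proof.
  assert (K : forall u v, rel_adj u v -> within _ coset_adj (coset0 u) (coset0 v) 2).
  { intros u' v' [s [[Hs|[i [Hi Hs]]] ->]].
    - apply (within_mono _ _ _ _ 1); auto.
      apply (coset_label_within _ _ u' s); simpl; try apply lcoset_self; auto. left; auto.
    - apply (within_trans _ _ _ (coset_of i Hi u') _ 1 1).
      + apply (coset_meet_within _ _ u'); simpl; apply lcoset_self; auto.
      + apply (coset_meet_within _ _ (gmul u' s)); simpl.
        * apply lcoset_mul_r; auto. apply lcoset_self; auto.
        * apply lcoset_self; auto. }
  intros [h|h]; [|apply within_sym]; apply K; auto.
Qed.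

Lemma coset_rep_within C a : proj1_sig C a -> within _ rel_adj (coset_rep C) a 1.
Proof.
  intros Ha. destruct (coset_rep_spec C) as [i [Hi E]]. rewrite E in Ha.
  destruct Ha as [h [Hh ->]]. apply within_linked. left. exists h. split; auto. right. eauto.
Qed.

Lemma coset_linked_rep C D : linked _ coset_adj C D ->
  within _ rel_adj (coset_rep C) (coset_rep D) 3.
Proof.
  assert (K : forall C D, coset_adj C D -> within _ rel_adj (coset_rep C) (coset_rep D) 3).
  { intros C' D' [_ [a [b [x [Ha [Hb [Hx ->]]]]]]].
    apply (within_trans _ _ _ a _ 1 2); [apply coset_rep_within; auto|].
    apply (within_trans _ _ _ (gmul a x) _ 1 1); [|apply within_sym, coset_rep_within; auto].
    destruct Hx as [Hx|[Hx| ->]].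
    - apply within_linked. left. exists x. split; auto. left; auto.
    - apply within_linked. right. exists (ginv x). split; [left; auto|].
      rewrite <- gmulA, gmul_inv_r, gmul_one_r. reflexivity.
    - rewrite gmul_one_r. apply (within_mono _ _ _ _ 0); auto. apply within_refl. }
  intros [h|h]; [|apply within_sym]; apply K; auto.
Qed.

Lemma coset0_rep_within C : within _ coset_adj (coset0 (coset_rep C)) C 1.
Proof.
  apply (coset_meet_within _ _ (coset_rep C)); [apply lcoset_self; auto | apply coset_rep_mem].
Qed.

Lemma rep_coset0_within u : within _ rel_adj (coset_rep (coset0 u)) u 1.
Proof. apply coset_rep_within. apply lcoset_self; auto. Qed.

Hypothesis rel_gen : rel_generating m H X.

Lemma rel_connected : graph_connected _ rel_adj.
Proof. apply generates_connected, rel_gen. Qed.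

Lemma coset_graph_connected : graph_connected _ coset_adj.
Proof.
  intros C D. destruct (rel_connected (coset_rep C) (coset_rep D)) as [n P].
  pose proof (within_map _ _ _ _ coset0 2 rel_linked_coset0 _ _ _ P) as Q.
  destruct (within_trans _ _ _ _ _ _ _ (within_trans _ _ _ _ _ _ _
              (within_sym _ _ _ _ _ (coset0_rep_within C)) Q) (coset0_rep_within D))
    as [k [_ Pk]].
  eauto.
Qed.

Lemma rel_coset_four_point_iff :
  (exists delta, four_point _ rel_adj delta) <-> (exists delta, four_point _ coset_adj delta).
Proof.
  pose proof rel_connected as CR. pose proof coset_graph_connected as CC.
  split; intros [delta F].
  - refine (four_point_transfer _ _ _ _ CR CC coset0 coset_rep 2 3 1 _ _ _ delta F);
      intros; apply gdist_le_within; auto.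
    + apply rel_linked_coset0; auto.
    + apply coset_linked_rep; auto.
    + apply coset0_rep_within.
  - refine (four_point_transfer _ _ _ _ CC CR coset_rep coset0 3 2 1 _ _ _ delta F);
      intros; apply gdist_le_within; auto.
    + apply coset_linked_rep; auto.
    + apply rel_linked_coset0; auto.
    + apply rep_coset0_within.
Qed.

End CosetGraph.

Open Scope R_scope.

Lemma INR_max (a b : nat) : INR (Nat.max a b) = Rmax (INR a) (INR b).
Proof.
  unfold Rmax. destruct (Nat.max_spec a b) as [[Hab ->]|[Hab ->]], (Rle_dec (INR a) (INR b));
    auto; [apply lt_INR in Hab | apply le_INR in Hab]; lra.
Qed.

Lemma four_point_INR_iff (a b c d e f k : nat) :
  (a + b <= Nat.max (c + d) (e + f) + 2 * k)%nat <->
  INR a + INR b <= Rmax (INR c + INR d) (INR e + INR f) + 2 * INR k.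
Proof.
  assert (E1 : INR (a + b) = INR a + INR b) by apply plus_INR.
  assert (E2 : INR (Nat.max (c + d) (e + f) + 2 * k)
               = Rmax (INR c + INR d) (INR e + INR f) + 2 * INR k).
  { rewrite plus_INR, INR_max, !plus_INR, mult_INR. simpl (INR 2). lra. }
  rewrite <- E1, <- E2.
  split; [apply le_INR | apply INR_le].
Qed.

Lemma gprod_condition_iff (dxy dxz dyz dwx dwy dwz delta : R) :
  gprod dxy dwx dwy >= Rmin (gprod dxz dwx dwz) (gprod dyz dwy dwz) - delta <->
  dxy + dwz <= Rmax (dxz + dwy) (dwx + dyz) + 2 * delta.
Proof.
  unfold gprod, Rmin, Rmax.
  destruct (Rle_dec _ _), (Rle_dec _ _); split; intros; lra.
Qed.

Definition dist_four_point (Gr : wgraph) (delta : R) : Prop :=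
  forall (x y z w : vert Gr) dxy dxz dyz dwx dwy dwz,
    is_dist x y dxy -> is_dist x z dxz -> is_dist y z dyz ->
    is_dist w x dwx -> is_dist w y dwy -> is_dist w z dwz ->
    dxy + dwz <= Rmax (dxz + dwy) (dwx + dyz) + 2 * delta.

Lemma hyperbolic_iff_dist_four_point (Gr : wgraph) :
  hyperbolic Gr <-> connected Gr /\ exists delta, 0 <= delta /\ dist_four_point Gr delta.
Proof.
  unfold hyperbolic, dist_four_point.
  split; intros [C [delta [Hd F]]]; split; auto; exists delta; split; auto;
    intros; apply gprod_condition_iff; eauto.
Qed.

Lemma walk_cat (Gr : wgraph) (u v w : vert Gr) l l' :
  walk u v l -> walk v w l' -> walk u w (l + l').
Proof.
  induction 1 as [u|u x v l1 l2 He _ IH]; intros Hv.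
  - now rewrite Rplus_0_l.
  - rewrite Rplus_assoc. econstructor; eauto.
Qed.

Lemma walk_rev (Gr : wgraph) (u v : vert Gr) l : walk u v l -> walk v u l.
Proof.
  induction 1 as [u|u w v l l' He _ IH]; [constructor|].
  rewrite Rplus_comm. apply (walk_cat Gr _ w); [exact IH|].
  rewrite <- (Rplus_0_r l). econstructor; [|constructor]. tauto.
Qed.

Section UnitGraph.
Variables (Gr : wgraph) (E : vert Gr -> vert Gr -> Prop).
Hypothesis unit_edges : forall u v l, wedge Gr u v l <-> l = 1 /\ E u v.

Lemma walk_npath u v l : walk u v l -> exists n, npath _ E u v n /\ l = INR n.
Proof.
  induction 1 as [u|u w v l l' He _ [n [Hn ->]]].
  - exists 0%nat. split; [constructor | reflexivity].
  - exists (S n). rewrite S_INR.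
    destruct He as [He|He]; apply unit_edges in He as [-> He];
      (split; [econstructor; [|eauto] | lra]); [left|right]; assumption.
Qed.

Lemma npath_walk u v n : npath _ E u v n -> walk u v (INR n).
Proof.
  induction 1 as [u|u w v n Hs _ IH]; [constructor|].
  rewrite S_INR, Rplus_comm. econstructor; [|eauto].
  destruct Hs; [left|right]; apply unit_edges; auto.
Qed.

Lemma connected_unit_iff : connected Gr <-> graph_connected _ E.
Proof.
  split; intros C u v; destruct (C u v) as [l Hl].
  - destruct (walk_npath _ _ _ Hl) as [n [Hn _]]. eauto.
  - eexists; apply npath_walk; eauto.
Qed.

Hypothesis conn : graph_connected _ E.

Lemma is_dist_unit_iff u v r : is_dist u v r <-> r = INR (gdist _ E u v).
Proof.
  split.
  - intros [Hlow Happ]. apply Rle_antisym.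
    + apply Hlow, npath_walk, npath_gdist, conn.
    + apply Rnot_lt_le. intros Hlt.
      destruct (Happ (INR (gdist _ E u v) - r) ltac:(lra)) as [l [Hw Hl]].
      destruct (walk_npath _ _ _ Hw) as [n [Hn ->]].
      pose proof (le_INR _ _ (gdist_min _ E conn _ _ _ Hn)). lra.
  - intros ->. split.
    + intros l Hw. destruct (walk_npath _ _ _ Hw) as [n [Hn ->]].
      apply le_INR, gdist_min; auto.
    + intros eps He. exists (INR (gdist _ E u v)).
      split; [apply npath_walk, npath_gdist, conn | lra].
Qed.

Lemma is_dist_unit u v : is_dist u v (INR (gdist _ E u v)).
Proof. now apply is_dist_unit_iff. Qed.

End UnitGraph.

Lemma hyperbolic_unit_iff (Gr : wgraph) (E : vert Gr -> vert Gr -> Prop) :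
  (forall u v l, wedge Gr u v l <-> l = 1 /\ E u v) ->
  hyperbolic Gr <-> graph_connected _ E /\ exists delta, four_point _ E delta.
Proof.
  intros HE. rewrite hyperbolic_iff_dist_four_point, (connected_unit_iff Gr E HE).
  split; intros [C [delta F]]; split; auto.
  - destruct F as [Hd F]. destruct (INR_unbounded delta) as [k Hk]. exists k.
    intros x y z w.
    rewrite (gdist_sym _ E C z w), (gdist_sym _ E C y w), (gdist_sym _ E C x w).
    apply four_point_INR_iff.
    pose proof (F x y z w _ _ _ _ _ _ (is_dist_unit Gr E HE C x y) (is_dist_unit Gr E HE C x z)
      (is_dist_unit Gr E HE C y z) (is_dist_unit Gr E HE C w x)
      (is_dist_unit Gr E HE C w y) (is_dist_unit Gr E HE C w z)). lra.
  - exists (INR delta). split; [apply pos_INR|].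
    intros x y z w dxy dxz dyz dwx dwy dwz H1 H2 H3 H4 H5 H6.
    apply (is_dist_unit_iff Gr E HE C) in H1, H2, H3, H4, H5, H6. subst.
    specialize (F x y z w).
    rewrite (gdist_sym _ E C z w), (gdist_sym _ E C y w), (gdist_sym _ E C x w) in F.
    now apply four_point_INR_iff.
Qed.

Lemma rel_cayley_coset_graph_hyperbolic_iff (G : Group) (m : nat) (H : nat -> G -> Prop)
  (X : list G) : (0 < m)%nat -> (forall i, (i < m)%nat -> is_subgroup (H i)) ->
  rel_generating m H X ->
  hyperbolic (rel_cayley m H X) <-> hyperbolic (coset_graph m H X).
Proof.
  intros Hm Hsub Hgen.
  rewrite (hyperbolic_unit_iff (rel_cayley m H X) (cayley_adj G (rel_gens G m H X)))
    by (intros; apply iff_refl).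
  rewrite (hyperbolic_unit_iff (coset_graph m H X) (coset_adj G m H X))
    by (intros; apply iff_refl).
  pose proof (rel_connected G m H X Hgen). pose proof (coset_graph_connected G m H X Hm Hsub Hgen).
  pose proof (rel_coset_four_point_iff G m H X Hm Hsub Hgen). tauto.
Qed.

Section ConedOff.
Variables (G : Group) (m : nat) (H : nat -> G -> Prop) (X : list G).
Hypothesis H_sub : forall i, (i < m)%nat -> is_subgroup (H i).
Hypothesis rel_gen : rel_generating m H X.

Local Notation Gr := (coned_off m H X).
Local Notation rel_adj := (cayley_adj G (rel_gens G m H X)).

Let rel_conn := rel_connected G m H X rel_gen.

Definition rel_dist (a b : G) : R := INR (gdist G rel_adj a b).

Definition anchored (u : vert Gr) (a : G) : Prop :=
  match u with inl g => a = g | inr C => proj1_sig C a end.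

Definition cone_height (u : vert Gr) : R := match u with inl _ => 0 | inr _ => 1/2 end.

Lemma rel_dist_triangle a b c : rel_dist a c <= rel_dist a b + rel_dist b c.
Proof. unfold rel_dist. rewrite <- plus_INR. apply le_INR, gdist_triangle, rel_conn. Qed.

Lemma rel_dist_sym a b : rel_dist a b = rel_dist b a.
Proof. unfold rel_dist. now rewrite gdist_sym by apply rel_conn. Qed.

Lemma rel_dist_xx a : rel_dist a a = 0.
Proof. unfold rel_dist. now rewrite gdist_xx by apply rel_conn. Qed.

Lemma rel_dist_le_1 a b : rel_adj a b -> rel_dist a b <= 1.
Proof. intros. apply (le_INR _ 1), gdist_linked; [apply rel_conn | left; assumption]. Qed.

Lemma rel_dist_coset (C : Coset m H) a a' : proj1_sig C a -> proj1_sig C a' -> rel_dist a a' <= 1.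
Proof.
  destruct C as [Cp [i [c [Hi ->]]]]. simpl. intros Ha Ha'.
  destruct (lcoset_diff G (H i) c a a' (H_sub i Hi) Ha Ha') as [h [Hh ->]].
  apply rel_dist_le_1. exists h. split; [right; eauto | reflexivity].
Qed.

(* Crossing a cone vertex costs 1/2 + 1/2, exactly one edge labelled by an element of H_i. *)
Lemma walk_rel_dist_le (u v : vert Gr) l : walk u v l ->
  forall a b, anchored u a -> anchored v b -> rel_dist a b <= l + cone_height u + cone_height v.
Proof.
  induction 1 as [u|u w v l l' He _ IH]; intros a b Ha Hb.
  - destruct u as [g|C]; simpl in *.
    + subst. rewrite rel_dist_xx. lra.
    + pose proof (rel_dist_coset C a b Ha Hb). lra.
  - destruct He as [He|He];
      destruct u as [g|C], w as [g'|C']; simpl in He, Ha; try contradiction.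
    + destruct He as [-> [s [Hs ->]]]. subst a.
      pose proof (IH (gmul g s) b eq_refl Hb). pose proof (rel_dist_triangle g (gmul g s) b).
      assert (rel_dist g (gmul g s) <= 1) by (apply rel_dist_le_1; exists s; split; [left|]; auto).
      simpl in *. lra.
    + destruct He as [-> Hg]. subst a. pose proof (IH g b Hg Hb). simpl in *. lra.
    + destruct He as [-> [s [Hs ->]]]. subst a.
      pose proof (IH g' b eq_refl Hb). pose proof (rel_dist_triangle (gmul g' s) g' b).
      assert (rel_dist (gmul g' s) g' <= 1)
        by (rewrite rel_dist_sym; apply rel_dist_le_1; exists s; split; [left|]; auto).
      simpl in *. lra.
    + destruct He as [-> Hg].
      pose proof (IH g' b eq_refl Hb). pose proof (rel_dist_triangle a g' b).
      pose proof (rel_dist_coset C a g' Ha Hg). simpl in *. lra.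
Qed.

Lemma rel_adj_walk a b : rel_adj a b -> @walk Gr (inl a) (inl b) 1.
Proof.
  intros [s [[Hs|[i [Hi Hs]]] ->]].
  - rewrite <- (Rplus_0_r 1). econstructor; [|constructor]. left. simpl. eauto.
  - set (C := coset_of G m H i Hi a).
    replace 1 with (1/2 + (1/2 + 0)) by lra.
    apply (@walk_cons Gr (inl a) (inr C)).
    { left. split; [reflexivity | apply lcoset_self; auto]. }
    apply (@walk_cons Gr (inr C) (inl (gmul a s))); [|constructor].
    right. split; [reflexivity|]. apply lcoset_mul_r, Hs; auto. apply lcoset_self; auto.
Qed.

Lemma npath_coned_walk a b n : npath G rel_adj a b n -> @walk Gr (inl a) (inl b) (INR n).
Proof.
  induction 1 as [u|u w v n Hs _ IH]; [constructor|].
  rewrite S_INR, Rplus_comm. apply (walk_cat Gr _ (inl w)); [|exact IH].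
  destruct Hs; [|apply walk_rev]; apply rel_adj_walk; assumption.
Qed.

Lemma anchor_exists (u : vert Gr) : exists a, anchored u a /\
  @walk Gr u (inl a) (cone_height u) /\ @walk Gr (inl a) u (cone_height u).
Proof.
  destruct u as [g|C].
  - exists g. repeat split; constructor.
  - exists (coset_rep G m H C).
    assert (W : @walk Gr (inl (coset_rep G m H C)) (inr C) (1/2)).
    { rewrite <- (Rplus_0_r (1/2)). econstructor; [|constructor].
      left. split; [reflexivity | apply coset_rep_mem, H_sub]. }
    repeat split; [apply coset_rep_mem, H_sub | apply walk_rev | ]; exact W.
Qed.

Lemma is_dist_inl a b : @is_dist Gr (inl a) (inl b) (rel_dist a b).
Proof.
  split.
  - intros l Hl. pose proof (walk_rel_dist_le _ _ _ Hl a b eq_refl eq_refl). simpl in *. lra.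
  - intros eps He. exists (rel_dist a b). split; [|lra].
    apply npath_coned_walk, npath_gdist, rel_conn.
Qed.

Lemma is_dist_anchor_close (u v : vert Gr) r a b : is_dist u v r ->
  anchored u a -> anchored v b -> @walk Gr u (inl a) (cone_height u) ->
  @walk Gr (inl b) v (cone_height v) -> r <= rel_dist a b + 1 /\ rel_dist a b <= r + 1.
Proof.
  intros [Dlow Dapp] Ha Hb Wa Wb.
  assert (Hu : 0 <= cone_height u <= 1/2) by (destruct u; simpl; lra).
  assert (Hv : 0 <= cone_height v <= 1/2) by (destruct v; simpl; lra).
  split.
  - pose proof (Dlow _ (walk_cat Gr _ _ _ _ _ (walk_cat Gr _ _ _ _ _ Wa
      (npath_coned_walk _ _ _ (npath_gdist _ _ rel_conn a b))) Wb)).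
    fold (rel_dist a b) in *. lra.
  - apply Rnot_lt_le. intros Hlt.
    destruct (Dapp (rel_dist a b - r - 1) ltac:(lra)) as [l [Hw Hl]].
    pose proof (walk_rel_dist_le _ _ _ Hw a b Ha Hb). lra.
Qed.

Lemma coned_connected : connected Gr.
Proof.
  intros u v.
  destruct (anchor_exists u) as [a [_ [Wa _]]], (anchor_exists v) as [b [_ [_ Wb]]].
  eexists. apply (walk_cat Gr _ _ _ _ _ (walk_cat Gr _ _ _ _ _ Wa
    (npath_coned_walk _ _ _ (npath_gdist _ _ rel_conn a b))) Wb).
Qed.

Lemma rel_cayley_coned_off_hyperbolic_iff : hyperbolic (rel_cayley m H X) <-> hyperbolic Gr.
Proof.
  assert (unit : forall u v l, wedge (rel_cayley m H X) u v l <-> l = 1 /\ rel_adj u v)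
    by (intros; apply iff_refl).
  assert (CR : connected (rel_cayley m H X))
    by now apply (connected_unit_iff (rel_cayley m H X) rel_adj).
  assert (Erel : forall a b r, @is_dist (rel_cayley m H X) a b r <-> r = rel_dist a b)
    by (intros; now apply (is_dist_unit_iff (rel_cayley m H X) rel_adj)).
  rewrite !hyperbolic_iff_dist_four_point.
  split; intros [_ [delta [Hd F]]]; split; try first [apply coned_connected | exact CR].
  - exists (delta + 2). split; [lra|].
    intros x y z w dxy dxz dyz dwx dwy dwz D1 D2 D3 D4 D5 D6.
    destruct (anchor_exists x) as [ax [Nx [Wx Wx']]], (anchor_exists y) as [ay [Ny [Wy Wy']]],
      (anchor_exists z) as [az [Nz [Wz Wz']]], (anchor_exists w) as [aw [Nw [Ww Ww']]].
    destruct (is_dist_anchor_close _ _ _ _ _ D1 Nx Ny Wx Wy'),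
      (is_dist_anchor_close _ _ _ _ _ D2 Nx Nz Wx Wz'),
      (is_dist_anchor_close _ _ _ _ _ D3 Ny Nz Wy Wz'),
      (is_dist_anchor_close _ _ _ _ _ D4 Nw Nx Ww Wx'),
      (is_dist_anchor_close _ _ _ _ _ D5 Nw Ny Ww Wy'),
      (is_dist_anchor_close _ _ _ _ _ D6 Nw Nz Ww Wz').
    pose proof (F ax ay az aw _ _ _ _ _ _ (proj2 (Erel _ _ _) eq_refl)
      (proj2 (Erel _ _ _) eq_refl) (proj2 (Erel _ _ _) eq_refl) (proj2 (Erel _ _ _) eq_refl)
      (proj2 (Erel _ _ _) eq_refl) (proj2 (Erel _ _ _) eq_refl)).
    unfold Rmax in *. do 2 destruct (Rle_dec _ _); lra.
  - exists delta. split; auto.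
    intros x y z w dxy dxz dyz dwx dwy dwz D1 D2 D3 D4 D5 D6.
    apply Erel in D1, D2, D3, D4, D5, D6. subst.
    apply (F (inl x) (inl y) (inl z) (inl w)); apply is_dist_inl.
Qed.

End ConedOff.

Theorem lemma2p1 (G : Group) (m : nat) (H : nat -> G -> Prop) (X : list G) :
  (0 < m)%nat ->
  (forall i, (i < m)%nat -> is_subgroup (H i)) ->
  rel_generating m H X ->
  (hyperbolic (rel_cayley m H X) <-> hyperbolic (coset_graph m H X)) /\
  (generates (fun s => In s X) ->
     (hyperbolic (rel_cayley m H X) <-> hyperbolic (coned_off m H X))).
Proof.
  intros Hm Hsub Hgen. split.
  - apply rel_cayley_coset_graph_hyperbolic_iff; assumption.
  - (* No generation by X is needed: the cone vertices already connect the coned-off graph. *)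
    intros _. apply rel_cayley_coned_off_hyperbolic_iff; assumption.
Qed.
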